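(* Let $n$ and $B$ be powers of $2$ with $2\le B\le n$. Let $\sigma$ be uniformly random among the odd integers in $[n]$ and $b$ independently uniformly random in $[n]$. Fix $f,f'\in[n]$ with $f\neq f'$ and consider $o_{f,\sigma,b}(f')$ as an element of $\{-n/2,\dots,n/2-1\}$. Then: (i) if $n/B$ does not divide $f-f'$, then $o_{f,\sigma,b}(f')$ is uniformly distributed on $\mathbb{Z}_n$; (ii) if $f-f'\equiv j\,(n/B)\pmod n$ with $j$ even, then $\Pr\{o_{f,\sigma,b}(f')=\ell\}=0$ for all integers $\ell\in[-n/B,n/B]$; (iii) if $f-f'\equiv j\,(n/B)\pmod n$ with $j$ odd, then $\Pr\{o_{f,\sigma,b}(f')=\ell\}=0$ for all integers $\ell\in[-\frac{n}{2B},\frac{n}{2B})$, and $\Pr\{o_{f,\sigma,b}(f')=\ell\}=\frac2n$ for all integers $\ell\in[-\frac nB,-\frac n{2B})\cup[\frac n{2B},\frac nB]$.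
   Context: For $\sigma,b\in[n]$: $\pi_{\sigma,b}(f)=\sigma(f-b)\bmod n$; $h_{\sigma,b}(f)=\mathrm{round}((B/n)\pi_{\sigma,b}(f))$ with $\mathrm{round}(y)=\lfloor y+1/2\rfloor$; and the offset $o_{f,\sigma,b}(f')=\pi_{\sigma,b}(f')-(n/B)h_{\sigma,b}(f)\bmod n$. Since $B$ is even, the parity of $j$ is well defined modulo $B$. *)

From HB Require Import structures.
From mathcomp Require Import all_boot all_order all_algebra.
Set Implicit Arguments. Unset Strict Implicit. Unset Printing Implicit Defensive.
Import Order.TTheory GRing.Theory Num.Theory.

(* [n] = {0,...,n-1}; all arithmetic below is in int (ring_scope / intdiv). *)
Local Open Scope ring_scope.

Definition perm_pi (n sigma b f : int) : int := ((sigma * (f - b)) %% n)%Z.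

Definition round (y : rat) : int := Num.floor (y + 1 / 2).

Definition hash (n B sigma b f : int) : int :=
  round ((B%:~R / n%:~R : rat) * (perm_pi n sigma b f)%:~R).

Definition offset (n B f sigma b f' : int) : int :=
  ((perm_pi n sigma b f' - (n %/ B)%Z * hash n B sigma b f) %% n)%Z.

Definition symrep (n x : int) : int :=
  let r := (x %% n)%Z in if r < (n %/ 2)%Z then r else r - n.

Definition offset_sym (n B f sigma b f' : int) : int :=
  symrep n (offset n B f sigma b f').

(* sample space: sigma uniform among odd elements of [n], b uniform in [n] *)
Definition sample_space (n : nat) : {set 'I_n * 'I_n} :=
  [set p : 'I_n * 'I_n | odd p.1].

(* Pr_{sigma,b}{ o_{f,sigma,b}(f') = l }, where the event compares the offset
   (an element of Z_n, represented in {-n/2..n/2-1}) with l viewed in Z_n. *)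
Definition prob_offset (n B f f' : nat) (l : int) : rat :=
  (#|[set p in sample_space n |
        offset_sym n B f p.1 p.2 f' == symrep n l]|)%:R
  / (#|sample_space n|)%:R.

From mathcomp Require Import all_boot all_order all_algebra zify ring.
Import Order.TTheory GRing.Theory Num.Theory.
Local Open Scope ring_scope.

(* Write pi = pi_{sigma,b} and d = f - f'.  The hash is h(f) = round (pi(f) / q),
   so q * h(f) = pi(f) - cres q (pi(f)), where cres q x is the centered residue
   of x modulo q (its representative y with -q <= 2y < q).  Hence
       o(f') = cres q (pi(f)) - sigma * d   (mod n),
   and the event "o = l" reads  n | cres q (pi(f)) - sigma * d - l.  For a fixed
   odd sigma, b |-> pi(f) is a bijection of Z/n, so the probability equals the
   number of pairs (sigma odd, x in [n]) with n | cres q x - sigma * d - l,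
   divided by (n/2) * n.  The three cases become counting problems:
   (i)   d = 2^a u with u odd and 2^a < q: for each x the odd solutions sigma
         number 2^a or 0 according to x mod 2^(a+1), giving n/2 pairs in all;
   (ii)  d = j q (mod n) with j even: cres q x - l would be 0 mod 2q, which the
         ranges only allow when n | d, excluded since f <> f';
   (iii) j odd: cres q x - l = q (mod 2q); impossible for |2l| < q, and for
         |2l| >= q it forces cres q x = l +- q, leaving exactly n pairs. *)

Lemma dvdz_small (d w : int) : 0 < d -> (d %| w)%Z -> - d < w < d -> w = 0.
Proof. move=> hd /dvdzP[k ->] /andP[h1 h2]; suff -> : k = 0 by rewrite mul0r. nia. Qed.

Lemma dvdz_congr (n a b : int) : (n %| a - b)%Z -> (n %| a)%Z = (n %| b)%Z.
Proof. by move=> hab; rewrite -(subrK b a) rpredDl. Qed.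

Lemma dvdz_sub_mod (n x : int) : (n %| x - (x %% n)%Z)%Z.
Proof. by apply/dvdzP; exists (x %/ n)%Z; have := divz_eq x n; lia. Qed.

Lemma oddz (y : int) : odd `|y| = (2 %| y - 1)%Z.
Proof.
have even_dvd (z : int) : (2 %| z)%Z = ~~ odd `|z| by exact: (dvdn2 `|z|).
apply/idP/idP.
  rewrite -[odd _]negbK -even_dvd => /negP hn.
  have e := divz_eq y 2.
  have h1 := modz_ge0 y (isT : (2:int) != 0).
  have h2 := ltz_pmod y (isT : (0:int) < 2).
  have [h0|h0] : (y %% 2)%Z = 0 \/ (y %% 2)%Z = 1 by lia.
    by exfalso; apply: hn; apply/dvdzP; exists (y %/ 2)%Z; lia.
  by apply/dvdzP; exists (y %/ 2)%Z; lia.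
move=> /dvdzP[a ha]; rewrite -[odd _]negbK -even_dvd; apply/negP => /dvdzP[b hb].
lia.
Qed.

Lemma oddn (x : nat) : odd x = (2 %| x%:Z - 1)%Z.
Proof. by rewrite -oddz absz_nat. Qed.

Lemma odd_mulz (u s : int) : (2 %| u - 1)%Z -> (2 %| u * s - 1)%Z = (2 %| s - 1)%Z.
Proof. by rewrite -!oddz abszM oddM => ->. Qed.

Lemma coprimez_pow2_odd (k : nat) (a : int) : (2 %| a - 1)%Z -> coprimez (2 ^ k)%N a.
Proof.
rewrite -oddz coprimezE absz_nat => ha.
by apply: coprimeXl; rewrite coprime2n.
Qed.

Lemma pow2_odd_decomp (d : int) : d != 0 ->
  exists2 u : int, (2 %| u - 1)%Z & d = (2 ^ logn 2 `|d|)%N%:Z * u.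
Proof.
rewrite -absz_gt0 => hd; have [m' hm' hdm] := pfactor_coprime (isT : prime 2) hd.
set a := logn 2 `|d| in hdm *.
exists (if 0 <= d then m'%:Z else - m'%:Z).
  by rewrite -oddz; case: ifP => _; rewrite ?abszN absz_nat -coprime2n.
case: (lerP 0 d) => hd0.
  by rewrite -{1}(gez0_abs hd0) hdm PoszM mulrC.
by rewrite -{1}[d]opprK -(ltz0_abs hd0) hdm PoszM mulrC mulrN.
Qed.

(* The centered residue of x modulo q: x - q * round (x / q), the unique y
   congruent to x modulo q with -q <= 2y < q. *)
Definition cres (q x : int) : int := x - q * ((2 * x + q) %/ (2 * q))%Z.

Lemma cres_range (q x : int) : 0 < q -> - q <= 2 * cres q x < q.
Proof.
move=> hq; rewrite /cres.
have hD : 0 < 2 * q by lia.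
have e := divz_eq (2 * x + q) (2 * q).
have r0 := modz_ge0 (2 * x + q) (lt0r_neq0 hD).
have r1 := ltz_pmod (2 * x + q) hD.
set h := ((2 * x + q) %/ (2 * q))%Z in e *.
set r := ((2 * x + q) %% (2 * q))%Z in e r0 r1 *.
lia.
Qed.

Lemma cres_dvd (q x : int) : (q %| x - cres q x)%Z.
Proof. by apply/dvdzP; exists ((2 * x + q) %/ (2 * q))%Z; rewrite /cres; ring. Qed.

Lemma cres_unique (q x y : int) : 0 < q -> - q <= 2 * y < q -> (q %| x - y)%Z ->
  cres q x = y.
Proof.
move=> hq hy hxy; have hc := cres_range q x hq.
have hd : (q %| cres q x - y)%Z.
  have -> : cres q x - y = (x - y) - (x - cres q x) by ring.
  by rewrite rpredB ?cres_dvd.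
suff : cres q x - y = 0 by lia.
by apply: (dvdz_small _ _ hq hd); lia.
Qed.

Lemma cres_congr (q x x' : int) : 0 < q -> (q %| x - x')%Z -> cres q x = cres q x'.
Proof.
move=> hq hx; apply: cres_unique => //; first exact: cres_range.
have -> : x - cres q x' = (x - x') + (x' - cres q x') by ring.
by rewrite rpredD ?cres_dvd.
Qed.

(* For n = q * B, round ((B / n) x) = round (x / q) = (2x + q) div 2q: this
   identifies q * h(f) with pi(f) - cres q (pi(f)). *)
Lemma round_scaled (q B x : int) : 0 < q -> 0 < B ->
  round ((B%:~R / (q * B)%:~R : rat) * x%:~R) = ((2 * x + q) %/ (2 * q))%Z.
Proof.
move=> hq hB; rewrite /round.
have hD : 0 < 2 * q by lia.
have e := divz_eq (2 * x + q) (2 * q).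
have r0 := modz_ge0 (2 * x + q) (lt0r_neq0 hD).
have r1 := ltz_pmod (2 * x + q) hD.
set h := ((2 * x + q) %/ (2 * q))%Z in e *.
set r := ((2 * x + q) %% (2 * q))%Z in e r0 r1 *.
apply: floor_def.
have hq0 : (q%:~R : rat) != 0 by rewrite intr_eq0 gt_eqF.
have hB0 : (B%:~R : rat) != 0 by rewrite intr_eq0 gt_eqF.
have -> : (B%:~R / (q * B)%:~R : rat) * x%:~R + 1 / 2 = h%:~R + r%:~R / (2 * q)%:~R.
  have ex : (x%:~R : rat) = ((h * (2 * q) + r)%:~R - q%:~R) / 2.
    by rewrite -e intrD intrM /=; field.
  by rewrite ex !intrM !intrD !intrM /=; field; rewrite hq0 hB0.
have frac0 : (0 : rat) <= r%:~R / (2 * q)%:~R by apply: divr_ge0; rewrite ler0z; lia.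
have frac1 : (r%:~R / (2 * q)%:~R : rat) < 1.
  by rewrite ltr_pdivrMr ?ltr0z // mul1r ltr_int.
by rewrite intrD lerDl frac0 ltrD2l.
Qed.

Lemma symrep_eq (n x y : int) : 0 < n ->
  (symrep n x == symrep n y) = (n %| x - y)%Z.
Proof.
move=> hn.
have symrep_dvd z : (n %| z - symrep n z)%Z.
  rewrite /symrep; case: ifP => _; first exact: dvdz_sub_mod.
  have -> : z - ((z %% n)%Z - n) = (z - (z %% n)%Z) + n by ring.
  by rewrite rpredD ?dvdz_sub_mod ?dvdzz.
apply/eqP/idP => [e|].
  have -> : x - y = (x - symrep n x) - (y - symrep n y) by rewrite e; ring.
  by rewrite rpredB ?symrep_dvd.
by rewrite -eqz_mod_dvd /symrep => /eqP ->.
Qed.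

Lemma perm_pi_dvd (n s b f : int) : (n %| s * (f - b) - perm_pi n s b f)%Z.
Proof. exact: dvdz_sub_mod. Qed.

Lemma offset_event (q B : nat) (s b f f' l : int) : (0 < q)%N -> (0 < B)%N ->
  (offset_sym (q * B)%N B f s b f' == symrep (q * B)%N l) =
  ((q * B)%N%:Z %| cres q (perm_pi (q * B)%N s b f) - s * (f - f') - l)%Z.
Proof.
move=> hq hB.
have hn : (0 : int) < (q * B)%N by rewrite ltz_nat muln_gt0 hq hB.
rewrite /offset_sym symrep_eq //; apply: dvdz_congr.
rewrite /offset /hash divz_nat mulnK // PoszM round_scaled ?ltz_nat //.
set P := perm_pi _ s b f; set P' := perm_pi _ s b f'.
set X := P' - _.
have -> : (X %% (q%:Z * B%:Z))%Z - l - (cres q P - s * (f - f') - l)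
    = - (X - (X %% (q%:Z * B%:Z))%Z) - (s * (f' - b) - P') + (s * (f - b) - P).
  by rewrite /X /cres; ring.
by apply/rpredD/perm_pi_dvd/rpredB/perm_pi_dvd; rewrite rpredN dvdz_sub_mod.
Qed.

Lemma count_residue_block (M a : nat) (r : int) : (0 < M)%N ->
  (\sum_(0 <= i < M) nat_of_bool (M%:Z %| ((i + a)%N%:Z - r)%R)%Z)%N = 1%N.
Proof.
move=> hM; rewrite big_mkord.
have hMz : (0 : int) < M by rewrite ltz_nat.
set t0 := ((r - a%:Z) %% M%:Z)%Z.
have t0ge : 0 <= t0 by apply: modz_ge0; rewrite gt_eqF.
have t0lt : t0 < M%:Z by apply: ltz_pmod.
have t0r : (M%:Z %| (r - a%:Z) - t0)%Z by exact: dvdz_sub_mod.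
have tlt : (`|t0| < M)%N by rewrite -ltz_nat gez0_abs.
rewrite (bigD1 (Ordinal tlt)) //= big1 ?addn0.
  suff -> : (M%:Z %| (`|t0| + a)%N%:Z - r)%Z by [].
  rewrite PoszD gez0_abs // -rpredN.
  by have -> : - (t0 + a%:Z - r) = r - a%:Z - t0 by ring.
move=> i hi; apply/eqP; rewrite eqb0; apply/negP => hd.
move/eqP: hi; apply; apply/val_inj => /=.
have hi' := ltn_ord i; rewrite -ltz_nat in hi'.
suff : (i : int) - t0 = 0 by move=> h; apply/eqP; rewrite -eqz_nat gez0_abs //; apply/eqP; lia.
apply: (dvdz_small _ _ hMz); last by lia.
have -> : (i : int) - t0 = ((i + a)%N%:Z - r) + ((r - a%:Z) - t0) by rewrite PoszD; ring.
exact: rpredD.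
Qed.

Lemma count_residue (M K : nat) (r : int) : (0 < M)%N ->
  (\sum_(0 <= x < M * K) nat_of_bool (M%:Z %| (x%:Z - r)%R)%Z)%N = K.
Proof.
move=> hM; elim: K => [|K IH]; first by rewrite muln0 big_geq.
rewrite mulnSr (@big_cat_nat _ _ _ (M * K)) ?leq_addr //= IH.
rewrite -{1}(add0n (M * K)%N) big_addn addKn.
by rewrite count_residue_block // addn1.
Qed.

(* An affine map x |-> a x + c with a a unit modulo n permutes Z/n, so it
   leaves sums of n-periodic functions over [0, n) unchanged. *)
Lemma sum_affine_reindex (n : nat) (a c : int) (F : int -> nat) : (0 < n)%N ->
  coprimez n a -> (forall x, F x = F (x %% n)%Z) ->
  (\sum_(0 <= i < n) F (a * i%:Z + c)%R)%N = (\sum_(0 <= i < n) F i%:Z)%N.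
Proof.
move=> hn hco hF.
have hz : (0 : int) < n by rewrite ltz_nat.
have mod_ge0 x : 0 <= (x %% n)%Z by apply: modz_ge0; rewrite gt_eqF.
have mod_lt x : (`|(x %% n)%Z| < n)%N by rewrite -ltz_nat gez0_abs ?ltz_pmod.
rewrite !big_mkord.
pose h (i : 'I_n) : 'I_n := Ordinal (mod_lt (a * i%:Z + c)).
have hinj : injective h.
  move=> i j /(congr1 val) /= /(congr1 Posz).
  rewrite !gez0_abs // => /eqP; rewrite eqz_mod_dvd.
  have -> : a * i + c - (a * j + c) = a * (i%:Z - j%:Z) by ring.
  rewrite Gauss_dvdzr // => hd.
  apply/val_inj/eqP; rewrite -eqz_nat; apply/eqP; change (Posz i = Posz j).
  have hi := ltn_ord i; have hj := ltn_ord j.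
  rewrite -ltz_nat in hi; rewrite -ltz_nat in hj.
  suff : i%:Z - j%:Z = 0 by lia.
  by apply: (dvdz_small _ _ hz hd); lia.
rewrite [RHS](reindex_inj hinj) /=.
by apply: eq_bigr => i _; rewrite gez0_abs // -hF.
Qed.

Lemma card_pairs (n : nat) (P : 'I_n -> 'I_n -> bool) :
  #|[set p : 'I_n * 'I_n | P p.1 p.2]| = (\sum_(i < n) \sum_(j < n) P i j)%N.
Proof.
rewrite -sum1_card big_mkcond /= pair_bigA /=.
by apply: eq_bigr => p _; rewrite inE; case: (P _ _).
Qed.

(* The number of pairs (s, x), s odd, x in [0, n), with
   cres q x = s * d + l (mod n): the numerator of the probability. *)
Definition hit_count (q n : nat) (d l : int) : nat :=
  \sum_(0 <= s < n) \sum_(0 <= x < n)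
     nat_of_bool (odd s && (n%:Z %| (cres q x%:Z - s%:Z * d - l)%R)%Z).

(* cres q takes every value of its window exactly B times on [0, q * B), so
   the x whose centered residue lies in a class mod q * B meeting the window
   number B. *)
Lemma count_cres (q B : nat) (y0 c : int) : (0 < q)%N -> (0 < B)%N ->
  - q%:Z <= 2 * y0 < q%:Z -> ((q * B)%N%:Z %| y0 - c)%Z ->
  (\sum_(0 <= x < q * B) nat_of_bool ((q * B)%N%:Z %| (cres q x - c)%R)%Z)%N = B.
Proof.
move=> hq hB hy hc.
have hqz : (0 : int) < q by rewrite ltz_nat.
have hnz : (0 : int) < (q * B)%N by rewrite ltz_nat muln_gt0 hq.
rewrite -[RHS](count_residue q B y0 hq).
apply: eq_bigr => x _; congr nat_of_bool.
rewrite (@dvdz_congr _ _ (cres q x - y0)); last first.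
  by have -> : cres q x - c - (cres q x - y0) = y0 - c by ring.
apply/idP/idP => hd.
  have hw := cres_range q x hqz.
  have e : cres q x - y0 = 0.
    have hBz : (0 : int) < B by rewrite ltz_nat.
    by apply: (dvdz_small _ _ hnz hd); rewrite PoszM; clear -hw hy hBz; nia.
  by rewrite (_ : x%:Z - y0 = x%:Z - cres q x) ?cres_dvd //; clear -e; lia.
by rewrite (cres_unique _ _ _ hqz hy hd) subrr dvdz0.
Qed.

(* Case j even: s d = 0 (mod 2q), so y = l (mod 2q); the ranges force y = l
   and then n | s d, hence n | d since s is a unit. *)
Lemma no_hit_even (n q y s d j l : int) : 0 < q -> (2 * q %| n)%Z ->
  (n %| d - j * q)%Z -> ~~ odd `|j| -> ~~ (n %| d)%Z -> coprimez n s ->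
  - q <= 2 * y < q -> - q <= l <= q -> ~~ (n %| y - s * d - l)%Z.
Proof.
move=> hq h2qn hdj hj hnd hco hy hl; apply/negP => hE.
have [j' hj'] : exists j', j = j' * 2.
  by apply/dvdzP; move: hj; rewrite -dvdn2.
have h2q : (2 * q %| y - l)%Z.
  have -> : y - l = (y - s * d - l) + s * (d - j * q) + (s * j') * (2 * q).
    by rewrite hj'; ring.
  apply: rpredD; first apply: rpredD.
  - exact: dvdz_trans h2qn hE.
  - exact: dvdz_mull (dvdz_trans h2qn hdj).
  - exact: dvdz_mull (dvdzz _).
have e : y - l = 0 by apply: (dvdz_small _ _ _ h2q); clear -hq hy hl; lia.
move/negP: hnd; apply.
rewrite -(Gauss_dvdzr _ hco).
have -> : s * d = - (y - s * d - l) + (y - l) by ring.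
by rewrite e addr0 rpredN.
Qed.

(* Case j, s odd: s d = q (mod 2q), so y - l = q (mod 2q), which the ranges
   exclude when |2l| < q. *)
Lemma no_hit_odd (n q y s d j l : int) : 0 < q -> (2 * q %| n)%Z ->
  (n %| d - j * q)%Z -> (2 %| j - 1)%Z -> (2 %| s - 1)%Z ->
  - q <= 2 * y < q -> - q <= 2 * l < q -> ~~ (n %| y - s * d - l)%Z.
Proof.
move=> hq h2qn hdj /dvdzP[j' hj'] /dvdzP[s' hs'] hy hl; apply/negP => hE.
have h2q : (2 * q %| y - l - q)%Z.
  have -> : y - l - q = (y - s * d - l) + s * (d - j * q) + (s * j' + s') * (2 * q).
    have -> : j = j' * 2 + 1 by clear -hj'; lia.
    have -> : s = s' * 2 + 1 by clear -hs'; lia.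
    ring.
  apply: rpredD; first apply: rpredD.
  - exact: dvdz_trans h2qn hE.
  - exact: dvdz_mull (dvdz_trans h2qn hdj).
  - exact: dvdz_mull (dvdzz _).
have : y - l - q = 0 by apply: (dvdz_small _ _ _ h2q); clear -hq hy hl; lia.
clear -hq hy hl; lia.
Qed.

(* Case j odd with l + t q in the window: cres q x must equal l + t q, so the
   count is B when B | s j - t, and 0 otherwise. *)
Lemma count_cres_shift (q B : nat) (s d j l t : int) : (0 < q)%N -> (0 < B)%N ->
  ((q * B)%N%:Z %| d - j * q%:Z)%Z ->
  - q%:Z <= 2 * (l + t * q%:Z) < q%:Z ->
  (\sum_(0 <= x < q * B) nat_of_bool ((q * B)%N%:Z %| (cres q x - s * d - l)%R)%Z)%N
  = if (B%:Z %| s * j - t)%Z then B else 0%N.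
Proof.
move=> hq hB hdj hwin.
have hqz : (0 : int) < q by rewrite ltz_nat.
have hq0 : q%:Z != 0 by rewrite gt_eqF.
have shift_eq : ((q * B)%N%:Z %| (l + t * q%:Z) - (s * d + l))%Z = (B%:Z %| s * j - t)%Z.
  rewrite (@dvdz_congr _ _ (q%:Z * (t - s * j))); last first.
    have -> : l + t * q%:Z - (s * d + l) - q%:Z * (t - s * j) = - (s * (d - j * q%:Z)).
      by ring.
    by rewrite rpredN dvdz_mull.
  by rewrite PoszM dvdz_mul2l // -(rpredN _ (t - s * j)) opprB.
case: ifP => hBd.
  rewrite -shift_eq in hBd.
  rewrite -[RHS](count_cres _ _ _ _ hq hB hwin hBd).
  by apply: eq_bigr => x _; rewrite opprD addrA.
rewrite big1_seq // => x _; apply/eqP; rewrite eqb0; apply/negP => hE.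
move/negP: hBd; apply; rewrite -shift_eq.
have hw := cres_range q x hqz.
have hqn : (q%:Z %| (q * B)%N%:Z)%Z by rewrite PoszM dvdz_mulr.
have hy : cres q x = l + t * q%:Z.
  have hd : (q%:Z %| cres q x - (l + t * q%:Z))%Z.
    have -> : cres q x - (l + t * q%:Z)
        = (cres q x - s * d - l) + s * (d - j * q%:Z) + (s * j - t) * q%:Z by ring.
    apply: rpredD; first apply: rpredD.
    - exact: dvdz_trans hqn hE.
    - exact: dvdz_mull (dvdz_trans hqn hdj).
    - exact: dvdz_mull (dvdzz _).
  suff h0 : cres q x - (l + t * q%:Z) = 0 by clear -h0; lia.
  by apply: (dvdz_small _ _ hqz hd); clear -hw hwin; lia.
by rewrite -hy opprD addrA.
Qed.

Lemma count_odd_solutions (p n1 : nat) (u c : int) : (0 < p)%N -> (0 < n1)%N ->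
  (2 %| n1)%N -> (2 %| u - 1)%Z -> coprimez (p * n1)%N u ->
  (\sum_(0 <= s < p * n1)
     nat_of_bool (odd s && ((p * n1)%N%:Z %| (c - s%:Z * (p%:Z * u))%R)%Z))%N
  = if (2 * p%:Z %| c - p%:Z)%Z then p else 0%N.
Proof.
move=> hp hn1 h2n1 hu hco.
have hN : (0 < p * n1)%N by rewrite muln_gt0 hp.
have [h n1_eq] : exists h, n1 = (h * 2)%N by apply/dvdnP.
have h2N : (2 * p%:Z %| (p * n1)%N%:Z)%Z.
  by apply/dvdzP; exists h%:Z; rewrite n1_eq !PoszM; ring.
pose F (z : int) : nat :=
  nat_of_bool ((2 %| z - 1)%Z && ((p * n1)%N%:Z %| (c - z * p%:Z)%R)%Z).
have F_periodic z : F z = F (z %% (p * n1)%N)%Z.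
  have hz := dvdz_sub_mod (p * n1)%N z.
  rewrite /F; congr (nat_of_bool (_ && _)); apply: dvdz_congr.
    have -> : z - 1 - ((z %% (p * n1)%N)%Z - 1) = z - (z %% (p * n1)%N)%Z by ring.
    by apply: dvdz_trans hz; apply: dvdz_trans h2N; apply: dvdz_mulr.
  have -> : c - z * p%:Z - (c - (z %% (p * n1)%N)%Z * p%:Z)
      = - ((z - (z %% (p * n1)%N)%Z) * p%:Z) by ring.
  by rewrite rpredN dvdz_mulr.
transitivity (\sum_(0 <= s < p * n1) F (u * s%:Z + 0)%R)%N.
  apply: eq_bigr => s _; rewrite /F addr0 oddn odd_mulz //.
  by have -> : c - s%:Z * (p%:Z * u) = c - u * s%:Z * p%:Z by ring.
rewrite sum_affine_reindex // /F.
case: ifP => hc.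
  move/dvdzP: hc => [k hk].
  have c_eq : c = p%:Z * (2 * k + 1) by lia.
  rewrite mulnC -[RHS](count_residue n1 p (2 * k + 1) hn1).
  apply: eq_bigr => s _; congr nat_of_bool.
  rewrite c_eq.
  have -> : p%:Z * (2 * k + 1) - s%:Z * p%:Z = p%:Z * (2 * k + 1 - s%:Z) by ring.
  rewrite mulnC PoszM dvdz_mul2l ?eqz_nat -?lt0n // -(rpredN _ (2 * k + 1 - s%:Z)) opprB.
  apply/andb_idl => /dvdzP[r hr].
  apply/dvdzP; exists (k + h%:Z * r).
  by rewrite n1_eq PoszM in hr; clear -hr; lia.
rewrite big1_seq // => s _; apply/eqP; rewrite eqb0.
apply/negP => /andP[/dvdzP[a ha] hd]; move/negP: hc; apply.
have -> : c - p%:Z = (c - s%:Z * p%:Z) + a * (2 * p%:Z).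
  have -> : s%:Z = a * 2 + 1 by clear -ha; lia.
  ring.
by apply: rpredD; [exact: dvdz_trans h2N hd | exact: dvdz_mull (dvdzz _)].
Qed.

Lemma ndvd_dist (n f f' : nat) : (f < n)%N -> (f' < n)%N -> f <> f' ->
  ~~ (n%:Z %| f%:Z - f'%:Z)%Z.
Proof.
move=> hf hf' hff'; apply/negP => hd; apply: hff'.
have hn : (0 : int) < n by rewrite ltz_nat (leq_ltn_trans _ hf).
rewrite -!ltz_nat in hf hf'.
suff : f%:Z - f'%:Z = 0 by move=> h; apply/eqP; rewrite -eqz_nat; apply/eqP; lia.
by apply: (dvdz_small _ _ hn hd); lia.
Qed.

Section OffsetDistribution.

Variables e m : nat.
Hypothesis m_pos : (0 < m)%N.

Local Notation q := (2 ^ e)%N.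
Local Notation B := (2 ^ m)%N.
Local Notation n := (q * B)%N.

Lemma q_pos : (0 < q)%N. Proof. by rewrite expn_gt0. Qed.
Lemma B_pos : (0 < B)%N. Proof. by rewrite expn_gt0. Qed.

Lemma n_pos : (0 < n)%N. Proof. by rewrite muln_gt0 q_pos B_pos. Qed.

Lemma n_pow2 : n = (2 ^ (e + m))%N. Proof. by rewrite expnD. Qed.

Lemma n_half : n = (2 * n./2)%N.
Proof.
by rewrite mul2n even_halfK // oddM !oddX /= !orbF (gtn_eqF m_pos) andbF.
Qed.

Lemma q_dvd_n : (q%:Z %| n%:Z)%Z. Proof. by rewrite PoszM dvdz_mulr. Qed.

Lemma B_even : (2 %| B)%N.
Proof. by rewrite -{1}(expn1 2) dvdn_exp2l. Qed.

Lemma two_q_dvd_n : (2 * q%:Z %| n%:Z)%Z.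
Proof.
have -> : 2 * q%:Z = (q * 2)%N%:Z by rewrite PoszM mulrC.
by rewrite dvdzE !absz_nat dvdn_pmul2l ?q_pos ?B_even.
Qed.

Lemma odd_coprime (a : int) : (2 %| a - 1)%Z -> coprimez n a.
Proof. by rewrite n_pow2; exact: coprimez_pow2_odd. Qed.

(* The probability of the event as a normalized count of hits: reindex b by
   x = pi(f), an affine bijection of Z/n since sigma is odd. *)
Lemma prob_offset_hits (f f' : nat) (l : int) :
  prob_offset n B f f' l = (hit_count q n (f%:Z - f'%:Z) l)%:R / (n./2 * n)%:R.
Proof.
rewrite /prob_offset /sample_space.
have -> : [set p in [set p : 'I_n * 'I_n | odd p.1] | offset_sym n B f p.1 p.2 f' == symrep n l]
    = [set p : 'I_n * 'I_n | odd p.1 && (offset_sym n B f p.1 p.2 f' == symrep n l)].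
  by apply/setP => p; rewrite !inE.
rewrite (card_pairs _ (fun i j : 'I_n => odd i && (offset_sym n B f i j f' == symrep n l))).
rewrite (card_pairs _ (fun i j : 'I_n => odd i)).
congr (_%:R / _%:R).
  rewrite /hit_count [RHS]big_mkord; apply: eq_bigr => s _.
  case: (boolP (odd s)) => /= hs; last by rewrite !big1.
  have hq : (0 : int) < q by rewrite ltz_nat q_pos.
  pose F (z : int) : nat := nat_of_bool (n%:Z %| cres q z - s%:Z * (f%:Z - f'%:Z) - l)%Z.
  have F_congr z z' : (n%:Z %| z - z')%Z -> F z = F z'.
    by move=> h; rewrite /F (cres_congr _ _ _ hq (dvdz_trans q_dvd_n h)).
  transitivity (\sum_(0 <= j < n) F (- s%:Z * j%:Z + s%:Z * f%:Z)%R)%N.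
    rewrite big_mkord; apply: eq_bigr => j _.
    rewrite offset_event ?q_pos ?B_pos //; apply: F_congr; rewrite /perm_pi.
    have -> : ((s%:Z * (f%:Z - j%:Z)) %% n)%Z - (- s%:Z * j%:Z + s%:Z * f%:Z)
        = - (s%:Z * (f%:Z - j%:Z) - ((s%:Z * (f%:Z - j%:Z)) %% n)%Z) by ring.
    by rewrite rpredN dvdz_sub_mod.
  rewrite sum_affine_reindex ?n_pos ?coprimezN ?odd_coprime -?oddn //.
  by move=> z; apply: F_congr; rewrite dvdz_sub_mod.
under eq_bigr do rewrite sum_nat_const card_ord.
rewrite -big_distrr /= mulnC; congr (_ * _)%N.
rewrite -(big_mkord xpredT (fun i => nat_of_bool (odd i))) {1}n_half.
rewrite -[RHS](count_residue 2 n./2 1) //.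
by apply: eq_bigr => s _; rewrite oddn.
Qed.

(* Write d = p u with p = 2^a < q and u
   odd; then 2p | q, and for each x the odd solutions s number p exactly when
   x = l + p (mod 2p), which happens for n / 2p values of x. *)
Lemma hits_nondivisible (d l : int) :
  ~~ (q%:Z %| d)%Z -> hit_count q n d l = n./2.
Proof.
move=> hqd.
have d0 : d != 0 by apply: contraNneq hqd => ->; rewrite dvdz0.
have [u hu d_eq] := pow2_odd_decomp _ d0.
set a := logn 2 `|d| in d_eq; set p := (2 ^ a)%N in d_eq.
have a_lt : (a < e)%N.
  rewrite ltnNge; apply: contra hqd => hea.
  by rewrite d_eq dvdz_mulr // dvdzE !absz_nat dvdn_exp2l.
have hp : (0 < p)%N by rewrite expn_gt0.
have a_lt' : (a < e + m)%N by apply: leq_trans a_lt (leq_addr _ _).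
set n1 := (2 ^ (e + m - a))%N; set n2 := (2 ^ (e + m - a.+1))%N.
have n_p : n = (p * n1)%N by rewrite n_pow2 -expnD subnKC // ltnW.
have n_2p : n = (2 * p * n2)%N by rewrite n_pow2 -expnS -expnD subnKC.
have half_eq : n./2 = (p * n2)%N.
  by apply/eqP; rewrite -(eqn_pmul2l (isT : (0 < 2)%N)) -n_half n_2p mulnA.
have p2_dvd_q : ((2 * p)%N%:Z %| q%:Z)%Z.
  by rewrite dvdzE !absz_nat -expnS dvdn_exp2l.
rewrite /hit_count exchange_big /= half_eq.
transitivity
  (\sum_(0 <= x < n) p * nat_of_bool ((2 * p)%N%:Z %| (x%:Z - (l + p%:Z))%R)%Z)%N.
  apply: eq_bigr => x _.
  transitivity (\sum_(0 <= s < p * n1) nat_of_bool (odd s &&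
      ((p * n1)%N%:Z %| ((cres q x%:Z - l) - s%:Z * (p%:Z * u))%R)%Z))%N.
    rewrite -n_p; apply: eq_bigr => s _; rewrite d_eq.
    by have -> : cres q x%:Z - s%:Z * (p%:Z * u) - l
        = cres q x%:Z - l - s%:Z * (p%:Z * u) by ring.
  rewrite count_odd_solutions ?expn_gt0 -?n_p ?odd_coprime //; last first.
    by rewrite -{1}(expn1 2) dvdn_exp2l // subn_gt0.
  have -> : (2 * p%:Z %| cres q x%:Z - l - p%:Z)%Z
      = ((2 * p)%N%:Z %| x%:Z - (l + p%:Z))%Z.
    rewrite PoszM; apply: dvdz_congr.
    have -> : cres q x%:Z - l - p%:Z - (x%:Z - (l + p%:Z)) = - (x%:Z - cres q x%:Z).
      by ring.
    by rewrite rpredN -PoszM (dvdz_trans p2_dvd_q) ?cres_dvd.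
  by case: (_ %| _)%Z; rewrite ?muln1 ?muln0.
by rewrite -big_distrr /= n_2p count_residue ?muln_gt0.
Qed.

Lemma hits_even (d j l : int) : ~~ (n%:Z %| d)%Z -> (n%:Z %| d - j * q%:Z)%Z ->
  ~~ odd `|j| -> - q%:Z <= l <= q%:Z -> hit_count q n d l = 0%N.
Proof.
move=> hnd hdj hj hl; have hq : (0 : int) < q by rewrite ltz_nat q_pos.
rewrite /hit_count big1_seq // => s _; rewrite big1_seq // => x _.
apply/eqP; rewrite eqb0; apply/negP => /andP[hs]; apply/negP.
apply: (no_hit_even _ q%:Z _ s%:Z d j l) => //.
- exact: two_q_dvd_n.
- by apply: odd_coprime; rewrite -oddn.
- exact: cres_range.
Qed.

Lemma hits_odd_center (d j l : int) : (n%:Z %| d - j * q%:Z)%Z -> odd `|j| ->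
  - n%:Z <= (2 * B)%N%:Z * l < n%:Z -> hit_count q n d l = 0%N.
Proof.
move=> hdj hj hl; have hq : (0 : int) < q by rewrite ltz_nat q_pos.
have hl' : - q%:Z <= 2 * l < q%:Z.
  have hB : (0 : int) < B by rewrite ltz_nat B_pos.
  by rewrite !PoszM in hl; clear -hl hB; nia.
rewrite /hit_count big1_seq // => s _; rewrite big1_seq // => x _.
apply/eqP; rewrite eqb0; apply/negP => /andP[hs]; apply/negP.
apply: (no_hit_odd _ q%:Z _ s%:Z d j l) => //.
- exact: two_q_dvd_n.
- by rewrite -oddz.
- by rewrite -oddn.
- exact: cres_range.
Qed.

Lemma count_odd_class (j t : int) : (2 %| j - 1)%Z -> (2 %| t - 1)%Z ->
  (\sum_(0 <= s < n)
     nat_of_bool (odd s && (B%:Z %| (s%:Z * j - t)%R)%Z))%N = q.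
Proof.
move=> hj ht.
pose G (z : int) : nat := nat_of_bool ((2 %| z - 1)%Z && (B%:Z %| z - t)%Z).
have hBn : (B%:Z %| n%:Z)%Z by rewrite PoszM dvdz_mull.
have h2n : (2 %| n%:Z)%Z by apply: dvdz_trans two_q_dvd_n; apply: dvdz_mulr.
have G_periodic z : G z = G (z %% n)%Z.
  have hz := dvdz_sub_mod n z.
  rewrite /G; congr (nat_of_bool (_ && _)); apply: dvdz_congr.
    have -> : z - 1 - ((z %% n)%Z - 1) = z - (z %% n)%Z by ring.
    exact: dvdz_trans h2n hz.
  have -> : z - t - ((z %% n)%Z - t) = z - (z %% n)%Z by ring.
  exact: dvdz_trans hBn hz.
transitivity (\sum_(0 <= s < n) G (j * s%:Z + 0)%R)%N.
  by apply: eq_bigr => s _; rewrite /G addr0 oddn odd_mulz // mulrC.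
rewrite sum_affine_reindex ?n_pos ?odd_coprime // mulnC.
rewrite -[RHS](count_residue B q t B_pos); apply: eq_bigr => s _.
rewrite /G; congr nat_of_bool; apply/andb_idl => /dvdzP[k hk].
have [b hb] : exists b, B = (b * 2)%N by apply/dvdnP; exact: B_even.
move/dvdzP: ht => [c hc].
by apply/dvdzP; exists (k * b%:Z + c); rewrite hb PoszM in hk; clear -hk hc; lia.
Qed.

(* Case (iii), n/B <= |2l| <= 2n/B: exactly n hits, taking t = +-1. *)
Lemma hits_odd_side (d j l : int) : (n%:Z %| d - j * q%:Z)%Z -> odd `|j| ->
  (- n%:Z <= B%:Z * l /\ (2 * B)%N%:Z * l < - n%:Z) \/
  (n%:Z <= (2 * B)%N%:Z * l /\ B%:Z * l <= n%:Z) ->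
  hit_count q n d l = n.
Proof.
move=> hdj hj hl.
have hB : (0 : int) < B by rewrite ltz_nat B_pos.
have hq : (0 : int) < q by rewrite ltz_nat q_pos.
have [t ht hwin] : exists2 t : int, (2 %| t - 1)%Z & - q%:Z <= 2 * (l + t * q%:Z) < q%:Z.
  rewrite !PoszM in hl; case: hl => [[h1 h2]|[h1 h2]].
  - by exists 1 => //; clear -h1 h2 hB hq; nia.
  - by exists (-1) => //; clear -h1 h2 hB hq; nia.
transitivity ((\sum_(0 <= s < n)
    nat_of_bool (odd s && (B%:Z %| (s%:Z * j - t)%R)%Z)) * B)%N; last first.
  by rewrite count_odd_class // -oddz.
rewrite /hit_count big_distrl /=; apply: eq_bigr => s _.
case: (odd s); last by rewrite big1.
rewrite (count_cres_shift _ _ _ _ _ _ t q_pos B_pos hdj hwin) /=.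
by case: (_ %| _)%Z; rewrite ?mul1n ?mul0n.
Qed.

Lemma half_pos : (0 < n./2)%N.
Proof. by rewrite -(ltn_pmul2l (isT : (0 < 2)%N)) muln0 -n_half n_pos. Qed.

Lemma half_ratio : ((n./2)%:R / (n./2 * n)%:R : rat) = 1 / n%:R.
Proof. by field; rewrite !pnatr_eq0 -!lt0n half_pos q_pos B_pos. Qed.

Lemma full_ratio : (n%:R / (n./2 * n)%:R : rat) = 2 / n%:R.
Proof. by rewrite {1}n_half; field; rewrite !pnatr_eq0 -!lt0n half_pos q_pos B_pos. Qed.

End OffsetDistribution.

Theorem lemma5p5 (n B : nat)
  (Hn : exists k : nat, n = (2 ^ k)%N) (HB : exists m : nat, B = (2 ^ m)%N)
  (H2B : (2 <= B)%N) (HBn : (B <= n)%N)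
  (f f' : nat) (Hf : (f < n)%N) (Hf' : (f' < n)%N) (Hff' : f <> f') :
  (* (i) *)
  (~~ ((n %/ B)%N%:Z %| (f%:Z - f'%:Z))%Z ->
     forall l : int, - (n %/ 2)%N%:Z <= l < (n %/ 2)%N%:Z ->
       prob_offset n B f f' l = 1 / n%:R)
  /\
  (* (ii) *)
  (forall j : int, (f%:Z - f'%:Z == j * (n %/ B)%N%:Z %[mod n%:Z])%Z -> ~~ odd `|j|%N ->
     forall l : int, - (n %/ B)%N%:Z <= l <= (n %/ B)%N%:Z ->
       prob_offset n B f f' l = 0)
  /\
  (* (iii) *)
  (forall j : int, (f%:Z - f'%:Z == j * (n %/ B)%N%:Z %[mod n%:Z])%Z -> odd `|j|%N ->
     (forall l : int, - n%:Z <= (2 * B)%N%:Z * l < n%:Z ->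
        prob_offset n B f f' l = 0)
     /\
     (forall l : int,
        (- n%:Z <= B%:Z * l /\ (2 * B)%N%:Z * l < - n%:Z) \/
        (n%:Z <= (2 * B)%N%:Z * l /\ B%:Z * l <= n%:Z) ->
        prob_offset n B f f' l = 2 / n%:R)).
Proof.
have hnd := ndvd_dist _ _ _ Hf Hf' Hff'.
case: Hn => k hk; case: HB => m hm; subst B.
have m_pos : (0 < m)%N by move: H2B; rewrite -{1}(expn0 2) ltn_exp2l.
have n_eq : n = (2 ^ (k - m) * 2 ^ m)%N.
  by rewrite hk -expnD subnK // -(leq_exp2l _ _ (isT : (1 < 2)%N)) -hk.
have nB : (n %/ 2 ^ m)%N = (2 ^ (k - m))%N by rewrite n_eq mulnK ?expn_gt0.
rewrite nB; clear hk nB; subst n.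
split; last split.
- move=> hqd l _.
  by rewrite prob_offset_hits // hits_nondivisible // half_ratio.
- move=> j /[!eqz_mod_dvd] hdj hj l hl.
  by rewrite prob_offset_hits // (hits_even _ _ _ _ _ _ hnd hdj) ?mul0r.
- move=> j /[!eqz_mod_dvd] hdj hj; split => l hl.
    by rewrite prob_offset_hits // (hits_odd_center _ _ _ _ _ _ hdj) ?mul0r.
  by rewrite prob_offset_hits // (hits_odd_side _ _ _ _ _ _ hdj) ?full_ratio.
Qed.
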